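(* Let $\Sigma=\{\lambda\in\mathbb Z^3:\lambda_1+\lambda_2+\lambda_3=0\}$. Then $GL_3(F)=\bigcup_{\lambda\in\Sigma}K'F'^\times\lambda(\varpi)K$.
   Context: $F$ is a $p$-adic field with $p\ne2,3$, ring of integers $R$, uniformizer $\varpi$. $F'=F(\varpi')$ with $\varpi'^3=\varpi$, a totally ramified cubic extension with ring of integers $R'$, embedded in $M_3(F)$ via its regular representation on the $R$-basis $\{1,\varpi',\varpi'^2\}$ of $R'$, so that $\varpi'$ corresponds to the matrix with entries $1$ in positions $(2,1)$ and $(3,2)$, $\varpi$ in position $(1,3)$, and $0$ elsewhere; $F'^\times$ is thus a subgroup of $GL_3(F)$. $K=GL_3(R)$, and $K'$ is the lower triangular Iwahori subgroup, i.e. the elements of $K$ whose reduction mod $\varpi$ is lower triangular. $\lambda(\varpi)=\operatorname{diag}(\varpi^{\lambda_1},\varpi^{\lambda_2},\varpi^{\lambda_3})$. *)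

From HB Require Import structures.
From mathcomp Require Import all_boot all_order all_algebra.
Set Implicit Arguments. Unset Strict Implicit. Unset Printing Implicit Defensive.
Import Order.TTheory GRing.Theory Num.Theory.
Local Open Scope ring_scope.

(* A (normalized) discrete valuation v on a field F; v 0 is irrelevant. *)
Definition discrete_valuation (F : fieldType) (v : F -> int) : Prop :=
  [/\ (forall x y : F, x != 0 -> y != 0 -> v (x * y) = v x + v y),
      (forall x y : F, x != 0 -> y != 0 -> x + y != 0 ->
          Order.min (v x) (v y) <= v (x + y))
    & (exists w : F, w != 0 /\ v w = 1)].

Definition vge (F : fieldType) (v : F -> int) (x : F) (N : int) : Prop :=
  x = 0 \/ N <= v x.

Definition inR (F : fieldType) (v : F -> int) (x : F) : Prop := vge v x 0.

Definition v_complete (F : fieldType) (v : F -> int) : Prop :=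
  forall u : nat -> F,
    (forall N : int, exists M : nat, forall m n : nat,
        (M <= m)%N -> (M <= n)%N -> vge v (u m - u n) N) ->
    exists l : F, forall N : int, exists M : nat, forall n : nat,
        (M <= n)%N -> vge v (u n - l) N.

(* F is a p-adic field: a field of characteristic 0, complete for a discrete
   valuation, whose residue field R/(varpi) is finite of characteristic p
   (equivalently, a finite extension of Q_p). *)
Definition padic_field (F : fieldType) (v : F -> int) (p : nat) : Prop :=
  [/\ prime p /\ ([pchar F] =i pred0),
      discrete_valuation v,
      v_complete v,
      vge v (p%:R : F) 1
    & (exists s : seq F, (forall y, y \in s -> inR v y) /\
        forall x : F, inR v x -> exists2 y, y \in s & vge v (x - y) 1)].

(* The matrix of varpi' (varpi'^3 = varpi) acting on the basis 1, varpi',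
   varpi'^2: ones at (2,1), (3,2), varpi at (1,3) (1-indexed). *)
Definition varpi'_mx (F : fieldType) (w : F) : 'M[F]_3 :=
  \matrix_(i < 3, j < 3)
    (if ((i : nat) == 1%N) && ((j : nat) == 0%N) then 1
     else if ((i : nat) == 2%N) && ((j : nat) == 1%N) then 1
     else if ((i : nat) == 0%N) && ((j : nat) == 2%N) then w
     else 0).

(* F'^x embedded in GL_3(F): invertible elements a + b varpi' + c varpi'^2. *)
Definition in_F'units (F : fieldType) (w : F) (g : 'M[F]_3) : Prop :=
  (exists a b c : F,
      g = a%:M + b *: varpi'_mx w + c *: (varpi'_mx w *m varpi'_mx w))
  /\ g \in unitmx.

Definition in_K (F : fieldType) (v : F -> int) (g : 'M[F]_3) : Prop :=
  (forall i j, inR v (g i j)) /\ \det g != 0 /\ v (\det g) = 0.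

Definition in_K' (F : fieldType) (v : F -> int) (g : 'M[F]_3) : Prop :=
  in_K v g /\ forall i j : 'I_3, (i < j)%N -> vge v (g i j) 1.

Definition lam_mx (F : fieldType) (w : F) (l1 l2 l3 : int) : 'M[F]_3 :=
  diag_mx (\row_(i < 3) w ^ (if (i : nat) == 0%N then l1
                            else if (i : nat) == 1%N then l2 else l3)).

From HB Require Import structures.
From mathcomp Require Import all_boot all_order all_algebra.
From mathcomp Require Import fingroup perm ring zify.
Set Implicit Arguments. Unset Strict Implicit. Unset Printing Implicit Defensive.
Import Order.TTheory GRing.Theory Num.Theory.
Local Open Scope ring_scope.

(* Over any discretely valued field, an invertible 3x3 matrix g is reduced to a
   diagonal matrix of powers of w by Gaussian elimination.  At each step the pivot
   is an entry of minimal valuation among the remaining rows and columns, and among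
   those the one in the lowest-indexed row.  Clearing the pivot column with row
   operations then uses multipliers that are integral, and lie in the maximal ideal
   for the rows above the pivot, so they belong to the Iwahori subgroup K'; the
   column operations, the rescaling of the pivot to a power of w, and the column
   swaps lie in K.  Finally, if the exponents of the diagonal matrix sum to 3t + r
   with r in {0, 1, 2}, it equals w^t varpi'^r lambda(w) times a power of a cyclic
   permutation matrix, with sum(lambda) = 0: multiplying a diagonal matrix by
   varpi' on the left and by a cyclic permutation matrix on the right permutes
   its entries cyclically and multiplies one of them by w. *)

Section Valuation.
Variables (F : fieldType) (v : F -> int).
Hypothesis dv : discrete_valuation v.

Lemma valuationM x y : x != 0 -> y != 0 -> v (x * y) = v x + v y.
Proof. by case: dv => vM _ _; apply: vM. Qed.

Lemma valuation1 : v 1 = 0.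
Proof.
have := valuationM (oner_neq0 F) (oner_neq0 F).
by rewrite mulr1; set a := v 1; lia.
Qed.

Lemma valuationV x : x != 0 -> v x^-1 = - v x.
Proof.
move=> x0; have xV0 : x^-1 != 0 by rewrite invr_eq0.
have := valuationM x0 xV0; rewrite mulfV // valuation1; set a := v x; lia.
Qed.

Lemma valuationN x : x != 0 -> v (- x) = v x.
Proof.
have N10 : (-1 : F) != 0 by rewrite oppr_eq0 oner_neq0.
have vN1 : v (-1) = 0.
  by have := valuationM N10 N10; rewrite mulrNN mulr1 valuation1; set a := v (-1); lia.
by move=> x0; rewrite -mulN1r valuationM // vN1 add0r.
Qed.

Lemma valuation_expz w : w != 0 -> v w = 1 -> forall z : int, v (w ^ z) = z.
Proof.
move=> w0 vw.
have vX (n : nat) : v (w ^+ n) = n.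
  elim: n => [|n IHn]; first by rewrite expr0 valuation1.
  by rewrite exprS valuationM ?expf_neq0 // IHn vw; lia.
case=> n; first by rewrite -exprnP vX.
by rewrite NegzE -exprnN valuationV ?expf_neq0 // vX.
Qed.

Lemma vge1 : inR v 1.
Proof. by right; rewrite valuation1. Qed.

Lemma vgeD x y N : vge v x N -> vge v y N -> vge v (x + y) N.
Proof.
case=> [->|vx]; first by rewrite add0r.
case=> [->|vy]; first by rewrite addr0; right.
have [->|x0] := eqVneq x 0; first by rewrite add0r; right.
have [->|y0] := eqVneq y 0; first by rewrite addr0; right.
have [->|xy0] := eqVneq (x + y) 0; first by left.
by right; case: dv => _ vD _; apply: le_trans (vD _ _ x0 y0 xy0); rewrite le_min vx.
Qed.

Lemma vgeN x N : vge v x N -> vge v (- x) N.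
Proof.
have [->|x0] := eqVneq x 0; first by rewrite oppr0.
by case=> [x0'|vx]; [move: x0; rewrite x0' eqxx | right; rewrite valuationN].
Qed.

Lemma vgeM x y M N : vge v x M -> vge v y N -> vge v (x * y) (M + N).
Proof.
have [->|x0] := eqVneq x 0; first by rewrite mul0r; left.
have [->|y0] := eqVneq y 0; first by rewrite mulr0; left.
case=> [/eqP|vx]; first by rewrite (negbTE x0).
case=> [/eqP|vy]; first by rewrite (negbTE y0).
by right; rewrite valuationM // lerD.
Qed.

Lemma vgeMl x y N : inR v x -> vge v y N -> vge v (x * y) N.
Proof. by move=> vx vy; have := vgeM vx vy; rewrite add0r. Qed.

Lemma vgeMr x y N : vge v x N -> inR v y -> vge v (x * y) N.
Proof. by move=> vx vy; have := vgeM vx vy; rewrite addr0. Qed.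

Lemma vge_div x y N : y != 0 -> vge v x N -> vge v (x / y) (N - v y).
Proof.
move=> y0 vx; apply: vgeM vx _; right.
by rewrite valuationV.
Qed.

Lemma vge_natr n : inR v n%:R.
Proof. by elim: n => [|n IHn]; [left | rewrite -addn1 natrD; apply: vgeD IHn vge1]. Qed.

Lemma vge_sum (I : Type) (r : seq I) (P : pred I) (f : I -> F) N :
  (forall i, P i -> vge v (f i) N) -> vge v (\sum_(i <- r | P i) f i) N.
Proof.
move=> vf; apply: (big_ind (vge v ^~ N)) => //; first by left.
by move=> x y; apply: vgeD.
Qed.

Lemma vge_prod (I : Type) (r : seq I) (P : pred I) (f : I -> F) :
  (forall i, P i -> inR v (f i)) -> inR v (\prod_(i <- r | P i) f i).
Proof.
move=> vf; apply: (big_ind (inR v)) => //; first exact: vge1.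
by move=> x y; apply: vgeMl.
Qed.

End Valuation.

Section CombinationMatrices.
Variables (F : fieldType) (n : nat).
Implicit Types (c d : 'I_n -> F) (X : 'M[F]_n).

Definition col_combmx c j0 : 'M[F]_n :=
  \matrix_(t, s) ((t == s)%:R + (t == j0)%:R * c s).

Definition row_combmx d i0 : 'M[F]_n := (col_combmx d i0)^T.

Definition col_combinv c j0 s : F := - c s / (1 + c j0).

Lemma mulmx_col_combmx X c j0 r s :
  (X *m col_combmx c j0) r s = X r s + X r j0 * c s.
Proof.
have sum_delta k (f : 'I_n -> F) : \sum_t (t == k)%:R * f t = f k.
  rewrite (bigD1 k) //= eqxx mul1r big1 ?addr0 // => t /negbTE->.
  by rewrite mul0r.
rewrite mxE -(sum_delta s (X r)) -(sum_delta j0 (fun t => X r t * c s)) -big_split.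
by apply: eq_bigr => t _; rewrite mxE /=; ring.
Qed.

Lemma row_combmx_mulmx d i0 X r s :
  (row_combmx d i0 *m X) r s = X r s + d r * X i0 s.
Proof. by rewrite -[X]trmxK -trmx_mul mxE mulmx_col_combmx !mxE mulrC. Qed.

Lemma col_combmxM c c' j0 :
  col_combmx c j0 *m col_combmx c' j0
  = col_combmx (fun s => c s + c' s + c j0 * c' s) j0.
Proof. by apply/matrixP => r s; rewrite mulmx_col_combmx !mxE; ring. Qed.

Lemma col_combmxV c j0 :
  1 + c j0 != 0 -> col_combmx c j0 *m col_combmx (col_combinv c j0) j0 = 1%:M.
Proof.
move=> cj0; apply/matrixP => r s; rewrite col_combmxM !mxE /col_combinv.
by field.
Qed.

Lemma col_combVmx c j0 :
  1 + c j0 != 0 -> col_combmx (col_combinv c j0) j0 *m col_combmx c j0 = 1%:M.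
Proof. by move=> cj0; apply: mulmx1C; apply: col_combmxV. Qed.

Lemma row_combmxV d i0 :
  d i0 = 0 -> row_combmx d i0 *m row_combmx (fun r => - d r) i0 = 1%:M.
Proof.
move=> di0; rewrite -trmx_mul col_combmxM -trmx1; congr _^T.
by apply/matrixP => r s; rewrite !mxE di0; ring.
Qed.

End CombinationMatrices.

Section IntegralMatrices.
Variables (F : fieldType) (v : F -> int).
Hypothesis dv : discrete_valuation v.

Definition integral_mx m n (A : 'M[F]_(m, n)) : Prop := forall i j, inR v (A i j).

Lemma det_integral n (A : 'M[F]_n) : integral_mx A -> inR v (\det A).
Proof.
move=> iA; apply: (vge_sum dv) => s _; apply: (vgeMl dv).
  by case: (odd_perm s); rewrite ?expr1 ?expr0; [apply: (vgeN dv) |]; apply: vge1.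
by apply: (vge_prod dv) => i _; apply: iA.
Qed.

Lemma in_K_of_mulmx_eq1 (A B : 'M[F]_3) :
  integral_mx A -> integral_mx B -> A *m B = 1%:M -> in_K v A.
Proof.
move=> iA iB AB; have detAB : \det A * \det B = 1 by rewrite -det_mulmx AB det1.
have dA0 : \det A != 0 by apply: contra_eq_neq detAB => ->; rewrite mul0r eq_sym oner_neq0.
have dB0 : \det B != 0 by apply: contra_eq_neq detAB => ->; rewrite mulr0 eq_sym oner_neq0.
split=> //; split=> //.
have := valuationM dv dA0 dB0; rewrite detAB valuation1 //.
case: (det_integral iA) => [/eqP|]; first by rewrite (negbTE dA0).
case: (det_integral iB) => [/eqP|]; first by rewrite (negbTE dB0).
set a := v (\det A); set b := v (\det B); lia.
Qed.

Lemma in_K_mul (A B : 'M[F]_3) : in_K v A -> in_K v B -> in_K v (A *m B).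
Proof.
move=> [iA [dA0 vdA]] [iB [dB0 vdB]]; split; last split.
- move=> i j; rewrite mxE; apply: (vge_sum dv) => k _.
  exact: (vgeMl dv (iA i k) (iB k j)).
- by rewrite det_mulmx mulf_neq0.
- by rewrite det_mulmx valuationM // vdA vdB addr0.
Qed.

Lemma in_K'_mul (A B : 'M[F]_3) : in_K' v A -> in_K' v B -> in_K' v (A *m B).
Proof.
move=> [KA upA] [KB upB]; split; first exact: in_K_mul.
move=> i j ij; rewrite mxE; apply: (vge_sum dv) => k _.
have [ik|ki] := ltnP i k; first by apply: (vgeMr dv); [apply: upA | apply: KB.1].
by apply: (vgeMl dv); [apply: KA.1 | apply: upB; apply: leq_ltn_trans ij].
Qed.

Lemma in_K_perm (s : 'S_3) : in_K v (perm_mx s).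
Proof.
have iP (t : 'S_3) : integral_mx (perm_mx t).
  by move=> i j; rewrite !mxE; apply: (vge_natr dv).
by apply: (in_K_of_mulmx_eq1 (iP s) (iP s^-1)%g); rewrite -perm_mxM mulgV perm_mx1.
Qed.

Lemma in_K'_1 : in_K' v (1%:M : 'M[F]_3).
Proof.
split; first by rewrite -perm_mx1; apply: in_K_perm.
move=> i j ij; have /negbTE ij' : i != j by rewrite neq_ltn ij.
by rewrite mxE ij'; left.
Qed.

Lemma integral_col_combmx n (c : 'I_n -> F) j0 :
  (forall s, inR v (c s)) -> integral_mx (col_combmx c j0).
Proof.
move=> ic t s; rewrite mxE.
exact: (vgeD dv (vge_natr dv _) (vgeMl dv (vge_natr dv _) (ic s))).
Qed.

Lemma in_K_col_combmxV (c : 'I_3 -> F) j0 :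
  (forall s, inR v (c s)) -> 1 + c j0 != 0 -> v (1 + c j0) = 0 ->
  in_K v (col_combmx (col_combinv c j0) j0).
Proof.
move=> ic cj0 vcj0; apply: (in_K_of_mulmx_eq1 _ (integral_col_combmx j0 ic)).
  apply: integral_col_combmx => s; rewrite /col_combinv mulNr; apply: (vgeN dv).
  by have := vge_div dv cj0 (ic s); rewrite vcj0 subrr.
exact: col_combVmx.
Qed.

Lemma in_K'_row_combmx (d : 'I_3 -> F) i0 :
  d i0 = 0 -> (forall r, inR v (d r)) -> (forall r : 'I_3, (r < i0)%N -> vge v (d r) 1) ->
  in_K' v (row_combmx d i0).
Proof.
move=> di0 id d_above; split.
  have iN r : inR v (- d r) by exact: (vgeN dv (id r)).
  apply: (in_K_of_mulmx_eq1 _ _ (row_combmxV di0)) => r s; rewrite mxE.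
    exact: integral_col_combmx id s r.
  exact: integral_col_combmx iN s r.
move=> r t rt; have /negbTE tr : t != r by rewrite neq_ltn rt orbT.
rewrite !mxE tr add0r; have [ti0|_] := eqVneq t i0; last by rewrite mul0r; left.
by rewrite mul1r; apply: d_above; rewrite -ti0.
Qed.

End IntegralMatrices.

Section Elimination.
Variables (F : fieldType) (v : F -> int) (w : F).
Hypotheses (dv : discrete_valuation v) (w_neq0 : w != 0) (vw : v w = 1).

Definition reduced (A : {set 'I_3}) (h : 'M[F]_3) : Prop :=
  [/\ h \in unitmx,
      (forall i j, i != j -> (i \notin A) || (j \notin A) -> h i j = 0)
    & (forall i, i \notin A -> exists a : int, h i i = w ^ a)].

Definition pivot (h : 'M[F]_3) (i0 j0 : 'I_3) : Prop :=
  [/\ h i0 j0 != 0,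
      (forall s, vge v (h i0 s) (v (h i0 j0))),
      (forall r, vge v (h r j0) (v (h i0 j0)))
    & (forall r : 'I_3, (r < i0)%N -> vge v (h r j0) (v (h i0 j0) + 1))].

Section PivotStep.
Variables (A : {set 'I_3}) (h : 'M[F]_3) (i0 j0 : 'I_3).
Hypotheses (hA : reduced A h) (i0A : i0 \in A) (j0A : j0 \in A)
  (p_neq0 : h i0 j0 != 0)
  (pivot_row : forall s, vge v (h i0 s) (v (h i0 j0)))
  (pivot_col : forall r, vge v (h r j0) (v (h i0 j0)))
  (pivot_col_above : forall r : 'I_3, (r < i0)%N -> vge v (h r j0) (v (h i0 j0) + 1)).

Let p : F := h i0 j0.
Let a := v p.
Let d r := (r != i0)%:R * (h r j0 / p).
Let c s := (s == j0)%:R * (w ^ a / p) - h i0 s / p.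
Let hh := row_combmx (fun r => - d r) i0 *m h *m col_combmx c j0.
Let tau := tperm i0 j0.
Let h' := col_perm tau hh.

Let wa_neq0 : w ^ a != 0. Proof. exact: expfz_neq0. Qed.

Let hA_out r s : r != s -> (r \notin A) || (s \notin A) -> h r s = 0.
Proof. by case: hA => _ + _; apply. Qed.

Let h_col_out r : r \notin A -> h r j0 = 0.
Proof. by move=> rA; apply: hA_out; [apply: contraNneq rA => -> | rewrite rA]. Qed.

Let h_row_out s : s \notin A -> h i0 s = 0.
Proof. by move=> sA; apply: hA_out; [apply: contraNneq sA => <- | rewrite sA orbT]. Qed.

Let c_j0 : 1 + c j0 = w ^ a / p.
Proof. by rewrite /c eqxx -/p /=; field. Qed.

Let hh_entry r s :
  hh r s = if r == i0 then (s == j0)%:R * w ^ a else h r s - d r * h i0 s.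
Proof.
rewrite mulmx_col_combmx !row_combmx_mulmx /d /c /p.
by have [->|ri0] := eqVneq r i0; rewrite ?eqxx /=; field.
Qed.

Let hh_col r : r != i0 -> hh r j0 = 0.
Proof. by move=> ri0; rewrite hh_entry (negbTE ri0) /d ri0 -/p /=; field. Qed.

Let hh_out r s : (r \notin A) || (s \notin A) -> hh r s = h r s.
Proof.
move=> out; rewrite hh_entry; have [ri0|ri0] := eqVneq r i0.
  move: out; rewrite ri0 i0A /= => sA.
  by rewrite h_row_out // (negbTE (contraNneq _ sA)) ?mul0r // => ->.
case/orP: out => [rA|sA]; last by rewrite h_row_out // mulr0 subr0.
by rewrite /d h_col_out // mul0r mulr0 mul0r subr0.
Qed.

Let pivot_factor :
  h = row_combmx d i0 *m h' *m (perm_mx tau *m col_combmx (col_combinv c j0) j0).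
Proof.
have c_neq0 : 1 + c j0 != 0 by rewrite c_j0 mulf_neq0 ?invr_eq0.
have tau2 : perm_mx tau *m perm_mx tau = 1%:M :> 'M[F]_3.
  by rewrite -perm_mxM tperm2 perm_mx1.
have dK : row_combmx d i0 *m row_combmx (fun r => - d r) i0 = 1%:M.
  by apply: row_combmxV; rewrite /d eqxx mul0r.
rewrite /h' /hh col_permE tpermV -/tau -!mulmxA (mulmxA (perm_mx tau)) tau2 mul1mx.
by rewrite col_combmxV // mulmx1 !mulmxA dK mul1mx.
Qed.

Let vwa_p : v (w ^ a / p) = 0.
Proof. by rewrite valuationM ?invr_eq0 // valuationV // (valuation_expz dv) // subrr. Qed.

Let d_integral r : inR v (d r).
Proof.
rewrite /d; have [->|ri0] := eqVneq r i0; first by rewrite mul0r; left.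
apply: (vgeMl dv (vge_natr dv _)).
by have := vge_div dv p_neq0 (pivot_col r); rewrite subrr.
Qed.

Let d_above (r : 'I_3) : (r < i0)%N -> vge v (d r) 1.
Proof.
move=> ri0; have := vge_div dv p_neq0 (pivot_col_above ri0).
by rewrite addrAC subrr add0r -/p /d => /(vgeMl dv (vge_natr dv _)).
Qed.

Let c_integral s : inR v (c s).
Proof.
apply: (vgeD dv); first by apply: (vgeMl dv (vge_natr dv _)); right; rewrite vwa_p.
by apply: (vgeN dv); have := vge_div dv p_neq0 (pivot_row s); rewrite subrr.
Qed.

Let tau_in s : (tau s \in A) = (s \in A).
Proof. by rewrite /tau; case: tpermP => [->|->|]; rewrite ?i0A ?j0A. Qed.

Let tau_eq_j0 s : (tau s == j0) = (s == i0).
Proof. by rewrite -{1}(tpermL i0 j0) (inj_eq perm_inj). Qed.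

Let reduced_h' : reduced (A :\ i0) h'.
Proof.
have [h_unit _ h_diag] := hA.
have h'E r s : h' r s = hh r (tau s) by rewrite mxE.
split.
- by move: h_unit; rewrite pivot_factor !unitmx_mul => /andP [/andP [_ ->]].
- move=> r s rs out; rewrite h'E.
  have [ri0|ri0] := eqVneq r i0.
    by rewrite ri0 hh_entry eqxx tau_eq_j0 eq_sym -ri0 (negbTE rs) mul0r.
  have [si0|si0] := eqVneq s i0; first by rewrite si0 /tau tpermL hh_col.
  move: out; rewrite !in_setD1 ri0 si0 /= -(tau_in s) => out.
  rewrite hh_out // hA_out //.
  by rewrite /tau; case: tpermP => // /eqP; rewrite (negbTE si0).
- move=> r; rewrite in_setD1 negb_and negbK => /orP [/eqP ->|rA].
    by exists a; rewrite h'E /tau tpermL hh_entry !eqxx mul1r.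
  have [b hb] := h_diag r rA.
  by exists b; rewrite h'E /tau tpermD ?hh_out ?rA //; apply: contraNneq rA => <-.
Qed.

Lemma pivot_step :
  exists k' g k, [/\ in_K' v k', in_K v k, h = k' *m g *m k & reduced (A :\ i0) g].
Proof.
exists (row_combmx d i0), h', (perm_mx tau *m col_combmx (col_combinv c j0) j0).
split=> //; first by apply: (in_K'_row_combmx dv) => //; rewrite /d eqxx mul0r.
apply: (in_K_mul dv (in_K_perm dv _)); apply: (in_K_col_combmxV dv) => //.
  by rewrite c_j0 mulf_neq0 ?invr_eq0.
by rewrite c_j0 vwa_p.
Qed.

End PivotStep.

Lemma unitmx_row_neq0 n (h : 'M[F]_n) i : h \in unitmx -> exists j, h i j != 0.
Proof.
move=> h_unit; apply/existsP; apply: contraT => /existsPn h_row0.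
have /matrixP/(_ i i) := mulmxV h_unit; rewrite !mxE eqxx big1 => [/eqP|j _].
  by rewrite eq_sym oner_eq0.
by move/negPn/eqP: (h_row0 j) => ->; rewrite mul0r.
Qed.

Lemma exists_pivot A h :
  A != set0 -> reduced A h -> exists i0 j0, [/\ i0 \in A, j0 \in A & pivot h i0 j0].
Proof.
move=> /set0Pn [i iA] [h_unit h_out _].
have in_A r s : h r s != 0 -> r \in A -> s \in A.
  move=> hrs rA; apply: contraTT hrs => sA; rewrite h_out ?sA ?orbT ?eqxx //.
  by apply: contraNneq sA => <-.
have in_A' r s : h r s != 0 -> s \in A -> r \in A.
  move=> hrs sA; apply: contraTT hrs => rA; rewrite h_out ?rA ?eqxx //.
  by apply: contraNneq rA => ->.
have [j hij] := unitmx_row_neq0 i h_unit.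
pose P (x : 'I_3 * 'I_3) := [&& x.1 \in A, x.2 \in A & h x.1 x.2 != 0].
(* Lexicographic in (valuation, row index), as row indices are below 3. *)
pose key (x : 'I_3 * 'I_3) := 3 * v (h x.1 x.2) + (x.1 : nat)%:Z.
have Pij : P (i, j) by rewrite /P /= iA hij (in_A i j).
have [[i0 j0] /and3P [/= i0A j0A p0] key_min] := arg_minP key Pij.
have row_key s : h i0 s != 0 -> key (i0, j0) <= key (i0, s).
  by move=> his; apply: key_min; rewrite /P /= i0A his (in_A i0 s).
have col_key r : h r j0 != 0 -> key (i0, j0) <= key (r, j0).
  by move=> hrj; apply: key_min; rewrite /P /= j0A hrj (in_A' r j0).
exists i0, j0; split=> //; split=> // [s|r|r ri0].
- have [->|his] := eqVneq (h i0 s) 0; [by left | right].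
  by move: (row_key s his); rewrite /key /=; set x := v _; set y := v _; lia.
- have [->|hrj] := eqVneq (h r j0) 0; [by left | right].
  move: (col_key r hrj) (ltn_ord r); rewrite /key /=; set x := v _; set y := v _; lia.
- have [->|hrj] := eqVneq (h r j0) 0; [by left | right].
  move: (col_key r hrj) ri0; rewrite /key /=; set x := v _; set y := v _; lia.
Qed.

Lemma reduced_decomposition A h :
  reduced A h ->
  exists k' D k, [/\ in_K' v k', in_K v k, h = k' *m D *m k & reduced set0 D].
Proof.
move cardA : #|A| => n; elim: n A h cardA => [|n IHn] A h cardA hA.
  move/cards0_eq: cardA hA => -> hA; exists 1%:M, h, 1%:M.
  by split=> //; [exact: in_K'_1 | exact: (in_K'_1 dv).1 | rewrite mul1mx mulmx1].
have A_neq0 : A != set0 by rewrite -card_gt0 cardA.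
have [i0 [j0 [i0A j0A [p0 prow pcol pabove]]]] := exists_pivot A_neq0 hA.
have [k'1 [g [k1 [K'1 K1 hE gA]]]] := pivot_step hA i0A j0A p0 prow pcol pabove.
have cardA' : #|A :\ i0| = n by move: (cardsD1 i0 A); rewrite cardA i0A => -[].
have [k'2 [D [k2 [K'2 K2 gE DA]]]] := IHn _ _ cardA' gA.
exists (k'1 *m k'2), D, (k2 *m k1); split=> //; [exact: in_K'_mul | exact: in_K_mul |].
by rewrite hE gE !mulmxA.
Qed.

Lemma reduced_set0 D : reduced set0 D -> exists a0 a1 a2, D = lam_mx w a0 a1 a2.
Proof.
case=> _ D_out D_diag.
have [a0 e0] := D_diag (inord 0) (negbT (in_set0 _)).
have [a1 e1] := D_diag (inord 1) (negbT (in_set0 _)).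
have [a2 e2] := D_diag (inord 2) (negbT (in_set0 _)).
exists a0, a1, a2; apply/matrixP => i j; rewrite /lam_mx !mxE.
have [<-|ij] := eqVneq i j; last by rewrite mulr0n D_out ?in_set0.
rewrite mulr1n; case: i => [[|[|[|//]]] i3] /=.
- by rewrite -e0; congr (D _ _); apply: val_inj; rewrite /= inordK.
- by rewrite -e1; congr (D _ _); apply: val_inj; rewrite /= inordK.
- by rewrite -e2; congr (D _ _); apply: val_inj; rewrite /= inordK.
Qed.

End Elimination.

Section TotallyRamifiedCubic.
Variables (F : fieldType) (w : F).
Hypothesis w_neq0 : w != 0.

Definition rot3 : 'S_3 := perm (can_inj (@ordSK 3)).

Lemma lam_mx_unit l0 l1 l2 : lam_mx w l0 l1 l2 \in unitmx.
Proof.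
rewrite unitmxE unitfE det_diag; apply/prodf_neq0 => i _.
by rewrite mxE expfz_neq0.
Qed.

Lemma lam_mx_shift l0 l1 l2 t :
  lam_mx w (l0 + t) (l1 + t) (l2 + t) = w ^ t *: lam_mx w l0 l1 l2.
Proof.
apply/matrixP => i j; rewrite !mxE.
by case: i => [[|[|[|//]]] ?] /=; rewrite expfzDr // mulrnAr mulrC.
Qed.

Lemma varpi'_lam_mx l0 l1 l2 :
  varpi'_mx w *m lam_mx w l0 l1 l2 *m perm_mx rot3 = lam_mx w (l2 + 1) l0 l1.
Proof.
apply/matrixP => i j; rewrite !mxE; rewrite ?(big_ord_recr, big_ord0, mxE, permE) /=.
by case: i => [[|[|[|//]]] ?]; case: j => [[|[|[|//]]] ?] /=;
  rewrite ?expfzDr // ?expr1z; ring.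
Qed.

Lemma lam_mx_decomposition a0 a1 a2 :
  exists l1 l2 l3 : int, l1 + l2 + l3 = 0 /\
    exists e (s : 'S_3),
      in_F'units w e /\ lam_mx w a0 a1 a2 = e *m lam_mx w l1 l2 l3 *m perm_mx s.
Proof.
set t := ((a0 + a1 + a2) %/ 3)%Z; set r := ((a0 + a1 + a2) %% 3)%Z.
have sum_a : a0 + a1 + a2 = t * 3 + r := divz_eq _ _.
have r_range : 0 <= r < 3 by rewrite modz_ge0 ?ltz_pmod.
have lamE : lam_mx w a0 a1 a2 = w ^ t *: lam_mx w (a0 - t) (a1 - t) (a2 - t).
  by rewrite -lam_mx_shift !subrK.
have rot l0 l1 l2 :
    lam_mx w l0 l1 l2 = varpi'_mx w *m lam_mx w l1 l2 (l0 - 1) *m perm_mx rot3.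
  by rewrite varpi'_lam_mx subrK.
have e_unit e l1 l2 l3 s :
    lam_mx w a0 a1 a2 = e *m lam_mx w l1 l2 l3 *m perm_mx s -> e \in unitmx.
  by move=> E; move: (lam_mx_unit a0 a1 a2); rewrite E !unitmx_mul => /andP [/andP [->]].
have [r0|[r1|r2]] : r = 0 \/ r = 1 \/ r = 2 by lia.
- exists (a0 - t), (a1 - t), (a2 - t); split; first lia.
  have E : lam_mx w a0 a1 a2
           = (w ^ t)%:M *m lam_mx w (a0 - t) (a1 - t) (a2 - t) *m perm_mx 1.
    by rewrite perm_mx1 mulmx1 mul_scalar_mx.
  exists (w ^ t)%:M, 1%g; split=> //; split; last exact: e_unit E.
  by exists (w ^ t), 0, 0; rewrite !scale0r !addr0.
- exists (a1 - t), (a2 - t), (a0 - t - 1); split; first lia.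
  have E : lam_mx w a0 a1 a2
           = (w ^ t *: varpi'_mx w) *m lam_mx w (a1 - t) (a2 - t) (a0 - t - 1)
               *m perm_mx rot3.
    by rewrite lamE rot !scalemxAl.
  exists (w ^ t *: varpi'_mx w), rot3; split=> //; split; last exact: e_unit E.
  by exists 0, (w ^ t), 0; rewrite scale0r addr0 raddf0 add0r.
- exists (a2 - t), (a0 - t - 1), (a1 - t - 1); split; first lia.
  have E : lam_mx w a0 a1 a2
           = (w ^ t *: (varpi'_mx w *m varpi'_mx w))
               *m lam_mx w (a2 - t) (a0 - t - 1) (a1 - t - 1) *m perm_mx (rot3 * rot3)%g.
    by rewrite lamE rot rot perm_mxM !mulmxA !scalemxAl.
  exists (w ^ t *: (varpi'_mx w *m varpi'_mx w)), (rot3 * rot3)%g; split=> //.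
  split; last exact: e_unit E.
  by exists 0, 0, (w ^ t); rewrite !scale0r raddf0 !add0r.
Qed.

End TotallyRamifiedCubic.

Theorem lemma9p8 (F : fieldType) (v : F -> int) (p : nat)
  (HF : padic_field v p) (Hp2 : p != 2%N) (Hp3 : p != 3%N)
  (w : F) (Hw0 : w != 0) (Hw : v w = 1) :
  forall g : 'M[F]_3,
    g \in unitmx <->
    exists l1 l2 l3 : int, l1 + l2 + l3 = 0 /\
      exists k' e k : 'M[F]_3,
        [/\ in_K' v k', in_F'units w e, in_K v k
          & g = k' *m e *m lam_mx w l1 l2 l3 *m k].
Proof.
have [_ dv _ _ _] := HF.
move=> g; split=> [g_unit|].
- have g_red : reduced w setT g by split=> // [i j _ /orP[]|i]; rewrite in_setT.
  have [k' [D [k [K'k' Kk gE D_red]]]] := reduced_decomposition dv Hw0 Hw g_red.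
  have [a0 [a1 [a2 DE]]] := reduced_set0 D_red.
  have [l1 [l2 [l3 [sum0 [e [s [F'e lamE]]]]]]] := lam_mx_decomposition Hw0 a0 a1 a2.
  exists l1, l2, l3; split=> //; exists k', e, (perm_mx s *m k); split=> //.
    exact: (in_K_mul dv (in_K_perm dv s) Kk).
  by rewrite gE DE lamE !mulmxA.
- move=> [l1 [l2 [l3 [_ [k' [e [k [[[_ [dk' _]] _] [_ e_unit] [_ [dk _]] ->]]]]]]]].
  by rewrite !unitmx_mul e_unit lam_mx_unit // !unitmxE !unitfE dk' dk.
Qed.
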